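(* Let $\kappa$ be a fixed grounding calculus. If a grounding tree $\Gamma[\Delta]\blacktriangleright A$ corresponds to a legitimate grounding derivation in $\kappa$, then $\Gamma[\Delta]\blacktriangleright A$ is derivable from the hypotheses $\Gamma,\Delta$ in any calculus that contains the rules of $\kappa$, the rules for the immediate grounding operator $\blacktriangleright$, and the rules for the grounding tree operator $\triangleright$.
   Context: A grounding calculus $\kappa$ is a natural-deduction system whose grounding rules have the form: from premisses $A_1,\dots,A_n$ (the ground) and a possibly empty list of premisses $[C_1,\dots,C_m]$ (the conditions) infer $B$. A grounding derivation is a derivation constructed by exclusively applying grounding rules of $\kappa$ to a set of consistent hypotheses and containing at least one rule application. Language: formulae are built from propositional variables with $\bot,\neg,\wedge,\vee,\to$, and immediate grounding formulae $\Gamma[\Delta]\blacktriangleright A$, where $\Gamma,\Delta$ are finite lists ($\Delta$ possibly empty) whose elements are either formulae or expressions $(\Theta[\Sigma])\triangleright B$, where $B$ is a formula and $\Theta,\Sigma$ are again such lists (so $\triangleright$ can be nested arbitrarily); an expression $(\Theta[\Sigma])\triangleright B$ is not itself a formula. A grounding tree is a formula $\Gamma[\Delta]\blacktriangleright A$; when no element of $\Gamma,\Delta$ has the form $(\cdot)\triangleright\cdot$ it is an immediate grounding claim. Rules for $\blacktriangleright$: Introduction: immediately below an application of a grounding rule of $\kappa$ with premisses $A_1,\dots,A_n,[C_1,\dots,C_m]$ and conclusion $B$, infer $A_1,\dots,A_n[C_1,\dots,C_m]\blacktriangleright B$. Eliminations: from $\Gamma[\Delta]\blacktriangleright B$ infer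 $B$, and infer any element of $\Gamma$ or of $\Delta$ whose outermost operator is not $\triangleright$; from $A_1,\dots,A_n[C_1,\dots,C_m]\blacktriangleright B$ infer $\bot$ whenever there is no grounding rule application with those premisses and conclusion. Rules for $\triangleright$: Introductions: from $\Delta[\Theta]\blacktriangleright A$ and $\Gamma_1,A,\Gamma_2[\Xi]\blacktriangleright B$ infer $\Gamma_1,(\Delta[\Theta])\triangleright A,\Gamma_2[\Xi]\blacktriangleright B$; from $\Delta[\Theta]\blacktriangleright C$ and $\Gamma[\Xi_1,C,\Xi_2]\blacktriangleright B$ infer $\Gamma[\Xi_1,(\Delta[\Theta])\triangleright C,\Xi_2]\blacktriangleright B$. Eliminations: from $\Gamma_1,(\Delta[\Theta])\triangleright A,\Gamma_2[\Xi]\blacktriangleright B$ infer $\Delta[\Theta]\blacktriangleright A$ and $\Gamma_1,A,\Gamma_2[\Xi]\blacktriangleright B$; from $\Gamma[\Xi_1,(\Delta[\Theta])\triangleright C,\Xi_2]\blacktriangleright B$ infer $\Delta[\Theta]\blacktriangleright C$ and $\Gamma[\Xi_1,C,\Xi_2]\blacktriangleright B$. Correspondence: a grounding tree $G_1,\dots,G_m[G_{m+1},\dots,G_n]\blacktriangleright A$ (or an expression $(G_1,\dots,G_m[G_{m+1},\dots,G_n])\triangleright A$) corresponds to a grounding derivation $\delta$ iff the root of $\delta$ is $A$, the last rule application $r$ of $\delta$ has $n$ premisses, the first $m$ of which are grounds and the rest conditions, and for each $i$: if $G_i$ does not have the form $(\cdot)\triangleright\cdot$ then the $i$-th premiss of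 $r$ is $G_i$, and if $G_i$ has the form $(\cdot)\triangleright\cdot$ then the grounding derivation of the $i$-th premiss of $r$ corresponds to $G_i$. *)

From Stdlib Require Import List.
Import ListNotations.
Set Implicit Arguments.

Inductive form : Type :=
| Var : nat -> form
| Bot : form
| Neg : form -> form
| And : form -> form -> form
| Or  : form -> form -> form
| Imp : form -> form -> form
(* Gnd G D A  is  G[D] ▶ A *)
| Gnd : list elem -> list elem -> form -> form
with elem : Type :=
| EF : form -> elem
| ET : list elem -> list elem -> form -> elem. (* (Θ[Σ]) ▷ B, not a formula *)

(* A grounding calculus κ is given by its set of grounding-rule applications:
   kappa grounds conditions conclusion. *)
Definition gcalculus := list form -> list form -> form -> Prop.

Inductive gder : Type :=
| Hyp : form -> gder
| App : list gder -> list gder -> form -> gder. (* grounds, conditions, conclusion *)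

Definition root (d : gder) : form :=
  match d with Hyp A => A | App _ _ B => B end.

Inductive valid (kappa : gcalculus) : gder -> Prop :=
| valid_hyp : forall A, valid kappa (Hyp A)
| valid_app : forall ds es B,
    Forall (valid kappa) ds -> Forall (valid kappa) es ->
    kappa (map root ds) (map root es) B ->
    valid kappa (App ds es B).

Fixpoint hyps (d : gder) : list form :=
  match d with
  | Hyp A => [A]
  | App ds es _ =>
      let fix hl (l : list gder) : list form :=
         match l with [] => [] | x :: r => hyps x ++ hl r end in
      hl ds ++ hl es
  end.

(** Classical consistency of a set of formulae: satisfiable by a valuation
    (atoms and ▶-formulae receive arbitrary truth values). *)
Fixpoint eval (v : nat -> bool) (g : list elem -> list elem -> form -> bool)
  (A : form) : bool :=
  match A with
  | Var n => v n
  | Bot => false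
  | Neg B => negb (eval v g B)
  | And B C => andb (eval v g B) (eval v g C)
  | Or B C => orb (eval v g B) (eval v g C)
  | Imp B C => orb (negb (eval v g B)) (eval v g C)
  | Gnd G D B => g G D B
  end.

Definition consistent (H : list form) : Prop :=
  exists v g, forall A, In A H -> eval v g A = true.

Definition grounding_derivation (kappa : gcalculus) (d : gder) : Prop :=
  valid kappa d /\ consistent (hyps d) /\ exists ds es B, d = App ds es B.

Inductive corresponds : list elem -> list elem -> form -> gder -> Prop :=
| corr_app : forall G D A ds es,
    Forall2 ecorr G ds -> Forall2 ecorr D es ->
    corresponds G D A (App ds es A)
with ecorr : elem -> gder -> Prop :=
| ecorr_form : forall C d, root d = C -> ecorr (EF C) d
| ecorr_tree : forall G D B d, corresponds G D B d -> ecorr (ET G D B) d.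

(** Hypotheses Γ,Δ of a grounding tree: its formula elements, recursively
    through nested ▷-expressions. *)
Fixpoint leaves_e (e : elem) : list form :=
  match e with
  | EF C => [C]
  | ET G D _ =>
      let fix ll (l : list elem) : list form :=
         match l with [] => [] | x :: r => leaves_e x ++ ll r end in
      ll G ++ ll D
  end.

Definition tree_hyps (G D : list elem) : list form :=
  leaves_e (ET G D Bot).

(* Extra : list of premisses -> conclusion, any additional (non-discharging)
   rules of a calculus extending the three groups of rules. *)
Inductive derivable (kappa : gcalculus) (Extra : list form -> form -> Prop)
  (Hs : form -> Prop) : form -> Prop :=
| d_hyp : forall A, Hs A -> derivable kappa Extra Hs A
| d_kappa : forall As Cs B,
    Forall (derivable kappa Extra Hs) As -> Forall (derivable kappa Extra Hs) Cs ->
    kappa As Cs B -> derivable kappa Extra Hs B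
| d_extra : forall Ps B,
    Forall (derivable kappa Extra Hs) Ps -> Extra Ps B -> derivable kappa Extra Hs B
| d_gnd_I : forall As Cs B,
    Forall (derivable kappa Extra Hs) As -> Forall (derivable kappa Extra Hs) Cs ->
    kappa As Cs B ->
    derivable kappa Extra Hs (Gnd (map EF As) (map EF Cs) B)
| d_gnd_E_concl : forall G D B,
    derivable kappa Extra Hs (Gnd G D B) -> derivable kappa Extra Hs B
| d_gnd_E_elem : forall G D B C,
    derivable kappa Extra Hs (Gnd G D B) -> In (EF C) (G ++ D) ->
    derivable kappa Extra Hs C
| d_gnd_E_bot : forall As Cs B,
    derivable kappa Extra Hs (Gnd (map EF As) (map EF Cs) B) ->
    ~ kappa As Cs B -> derivable kappa Extra Hs Bot
| d_tri_I_ground : forall D T A G1 G2 X B,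
    derivable kappa Extra Hs (Gnd D T A) ->
    derivable kappa Extra Hs (Gnd (G1 ++ EF A :: G2) X B) ->
    derivable kappa Extra Hs (Gnd (G1 ++ ET D T A :: G2) X B)
| d_tri_I_cond : forall D T C G X1 X2 B,
    derivable kappa Extra Hs (Gnd D T C) ->
    derivable kappa Extra Hs (Gnd G (X1 ++ EF C :: X2) B) ->
    derivable kappa Extra Hs (Gnd G (X1 ++ ET D T C :: X2) B)
| d_tri_E_ground1 : forall D T A G1 G2 X B,
    derivable kappa Extra Hs (Gnd (G1 ++ ET D T A :: G2) X B) ->
    derivable kappa Extra Hs (Gnd D T A)
| d_tri_E_ground2 : forall D T A G1 G2 X B,
    derivable kappa Extra Hs (Gnd (G1 ++ ET D T A :: G2) X B) ->
    derivable kappa Extra Hs (Gnd (G1 ++ EF A :: G2) X B)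
| d_tri_E_cond1 : forall D T C G X1 X2 B,
    derivable kappa Extra Hs (Gnd G (X1 ++ ET D T C :: X2) B) ->
    derivable kappa Extra Hs (Gnd D T C)
| d_tri_E_cond2 : forall D T C G X1 X2 B,
    derivable kappa Extra Hs (Gnd G (X1 ++ ET D T C :: X2) B) ->
    derivable kappa Extra Hs (Gnd G (X1 ++ EF C :: X2) B).

(* A valid derivation corresponding to [G[D] ▶ A] ends with a rule of κ whose
   premisses are read off the elements of G and D: a formula element is its own
   premiss, a nested [(Θ[Σ]) ▷ B] stands for the subderivation of B.  By
   induction on the derivation every nested [Θ[Σ] ▶ B] is derivable, hence so is
   its conclusion B (▶-elimination); ▶-introduction then yields the immediate
   grounding claim on the roots, and one ▷-introduction per nested element
   folds the subtrees back into the grounds and conditions. *)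
From Stdlib Require Import List.
Import ListNotations.
Set Implicit Arguments.

Section ValidInduction.
Variable kappa : gcalculus.
Variable P : gder -> Prop.
Hypothesis P_hyp : forall A, P (Hyp A).
Hypothesis P_app : forall ds es B,
  Forall P ds -> Forall P es -> kappa (map root ds) (map root es) B -> P (App ds es B).

Fixpoint valid_nested_ind (d : gder) (Hd : valid kappa d) : P d :=
  let fix valid_all (l : list gder) (Hl : Forall (valid kappa) l) : Forall P l :=
    match Hl with
    | Forall_nil _ => Forall_nil _
    | @Forall_cons _ _ x r Hx Hr => Forall_cons _ (valid_nested_ind Hx) (valid_all _ Hr)
    end in
  match Hd with
  | valid_hyp _ A => P_hyp A
  | @valid_app _ ds es B Hds Hes Hk => P_app (valid_all _ Hds) (valid_all _ Hes) Hk
  end.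
End ValidInduction.

Definition elem_form (e : elem) : form :=
  match e with EF C => C | ET _ _ B => B end.

Lemma corresponds_root G D A d : corresponds G D A d -> root d = A.
Proof. now destruct 1. Qed.

Lemma ecorr_root e d : ecorr e d -> root d = elem_form e.
Proof. destruct 1 as [C d Hd | G D B d Hc]; [exact Hd | exact (corresponds_root Hc)]. Qed.

Lemma map_root_ecorr G ds : Forall2 ecorr G ds -> map root ds = map elem_form G.
Proof. induction 1 as [|e d G ds Hed _ IH]; simpl; [reflexivity | now rewrite (ecorr_root Hed), IH]. Qed.

Lemma leaves_ET G D B : leaves_e (ET G D B) = flat_map leaves_e G ++ flat_map leaves_e D.
Proof. reflexivity. Qed.

Section Derivability.
Variables (kappa : gcalculus) (Extra : list form -> form -> Prop) (Hs : form -> Prop).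
Notation der := (derivable kappa Extra Hs).

Definition der_elem (e : elem) : Prop :=
  match e with EF C => der C | ET G D B => der (Gnd G D B) end.

Lemma der_elem_form e : der_elem e -> der (elem_form e).
Proof. destruct e; simpl; [trivial | apply d_gnd_E_concl]. Qed.

Lemma der_elems_forms G : Forall der_elem G -> Forall der (map elem_form G).
Proof. intro HG. apply Forall_map. exact (Forall_impl _ der_elem_form HG). Qed.

Lemma der_tri_I_grounds G : Forall der_elem G -> forall L X B,
  der (Gnd (L ++ map EF (map elem_form G)) X B) -> der (Gnd (L ++ G) X B).
Proof.
  induction 1 as [|e G He _ IH]; intros L X B H; [exact H|].
  replace (L ++ e :: G) with ((L ++ [e]) ++ G) by now rewrite <- app_assoc.
  destruct e as [C | G' D' B']; apply IH; rewrite <- app_assoc; simpl in *.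
  - exact H.
  - exact (d_tri_I_ground L _ He H).
Qed.

Lemma der_tri_I_conds D : Forall der_elem D -> forall G L B,
  der (Gnd G (L ++ map EF (map elem_form D)) B) -> der (Gnd G (L ++ D) B).
Proof.
  induction 1 as [|e D He _ IH]; intros G L B H; [exact H|].
  replace (L ++ e :: D) with ((L ++ [e]) ++ D) by now rewrite <- app_assoc.
  destruct e as [C | G' D' B']; apply IH; rewrite <- app_assoc; simpl in *.
  - exact H.
  - exact (d_tri_I_cond L _ He H).
Qed.

Definition tree_derivable (d : gder) : Prop :=
  forall G D A, corresponds G D A d ->
  (forall F, In F (tree_hyps G D) -> Hs F) -> der (Gnd G D A).

Lemma der_elems_ecorr G ds :
  Forall2 ecorr G ds -> Forall tree_derivable ds ->
  (forall F, In F (flat_map leaves_e G) -> Hs F) -> Forall der_elem G.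
Proof.
  induction 1 as [|e d G ds Hed _ IH]; intros Hds Hh; constructor;
    inversion_clear Hds as [|? ? Hd Hrest].
  - assert (He : forall F, In F (leaves_e e) -> Hs F)
      by (intros F HF; apply Hh; simpl; apply in_or_app; now left).
    destruct Hed as [C d _ | G' D' B' d Hc]; simpl.
    + apply d_hyp, He. now left.
    + exact (Hd _ _ _ Hc He).
  - apply IH; [exact Hrest|]. intros F HF. apply Hh. simpl. apply in_or_app. now right.
Qed.

Lemma valid_tree_derivable d : valid kappa d -> tree_derivable d.
Proof.
  induction 1 as [A | ds es B IHds IHes Hk] using valid_nested_ind;
    intros G D A' Hc Hh; inversion Hc as [? ? ? ? ? HG HD]; subst.
  unfold tree_hyps in Hh. rewrite leaves_ET in Hh.
  assert (HGder : Forall der_elem G)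
    by (apply (der_elems_ecorr HG IHds); intros; apply Hh, in_or_app; auto).
  assert (HDder : Forall der_elem D)
    by (apply (der_elems_ecorr HD IHes); intros; apply Hh, in_or_app; auto).
  rewrite (map_root_ecorr HG), (map_root_ecorr HD) in Hk.
  apply (der_tri_I_grounds HGder []), (der_tri_I_conds HDder []).
  exact (d_gnd_I B (der_elems_forms HGder) (der_elems_forms HDder) Hk).
Qed.

End Derivability.

Theorem mainTheorem2 (kappa : gcalculus) (G D : list elem) (A : form) (d : gder) :
  grounding_derivation kappa d ->
  corresponds G D A d ->
  forall Extra : list form -> form -> Prop,
    derivable kappa Extra (fun F => In F (tree_hyps G D)) (Gnd G D A).
Proof.
  intros [Hvalid _] Hc Extra.
  exact (valid_tree_derivable Extra _ Hvalid Hc (fun F HF => HF)).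
Qed.
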